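(* Let $\mathfrak g$ be a $3$-dimensional complex vector space with basis $\{e_1,e_2,e_3\}$ and let $\mu$ be the product with matrix $\begin{pmatrix}0&0&0\\0&0&1\\0&i&0\end{pmatrix}$, i.e. $\mu(e_2,e_3)=0$, $\mu(e_3,e_1)=ie_3$, $\mu(e_1,e_2)=e_2$. Then $T\in\operatorname{HL}(\mu)$ if and only if its matrix has the block form $T=\begin{pmatrix}T_{11}&0\\ v&\Theta\end{pmatrix}$ with $T_{11}\in\mathbb C$, $v\in\mathbb C^2$, $\Theta\in\operatorname{Mat}_{2\times2}(\mathbb C)$ (i.e. $T_{12}=T_{13}=0$). Moreover, for such $T$, the condition $\det(\Theta-T_{11}\mathbb 1_2)\neq0$ is invariant under the $G_\mu$-action, and: (1) if $\det(\Theta-T_{11}\mathbb 1_2)\neq 0$ then $T$ is equivalent to a map of the form $\begin{pmatrix}T'_{11}&0\\0&\Theta'\end{pmatrix}$ with $T'_{11}\in\mathbb C$, $\Theta'\in\operatorname{Mat}_{2\times 2}(\mathbb C)$; (2) if $\det(\Theta-T_{11}\mathbb 1_2)=0$ then $T$ is equivalent to a map of the form $\begin{pmatrix}T'_{11}&0\\ v'&\Theta'\end{pmatrix}$ with $\det(\Theta'-T'_{11}\mathbb 1_2)=0$.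
   Context: The matrix $(T_{ij})$ of a linear map in the basis $\{e_j\}$ is defined by $T(e_j)=\sum_iT_{ij}e_i$. $\operatorname{HL}(\mu)$ is the set of linear maps $T:\mathfrak g\to\mathfrak g$ with $\mu(T(x),\mu(y,z))+\mu(T(y),\mu(z,x))+\mu(T(z),\mu(x,y))=0$ for all $x,y,z$. $G_\mu=\{g\in\operatorname{GL}(\mathfrak g)\mid g(\mu(x,y))=\mu(g(x),g(y))\ \forall x,y\}$ is the automorphism group of $\mu$; it acts on $\operatorname{HL}(\mu)$ by $T\mapsto gTg^{-1}$, and $T,T'$ are equivalent if $T'=gTg^{-1}$ for some $g\in G_\mu$. *)

(* The complex field is rendered as an arbitrary
   numClosedFieldType C (algebraically closed field with 'i, e.g. algC / ℂ). *)
From HB Require Import structures.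
From mathcomp Require Import all_boot all_order all_algebra.
Set Implicit Arguments. Unset Strict Implicit. Unset Printing Implicit Defensive.
Import Order.TTheory GRing.Theory Num.Theory.
Local Open Scope ring_scope.

Section Defs.
Variable C : numClosedFieldType.

(* vectors of g = C^3 are column vectors; basis e_1,e_2,e_3 = indices 0,1,2 *)
Definition i1 : 'I_3 := @Ordinal 3 0 isT.
Definition i2 : 'I_3 := @Ordinal 3 1 isT.
Definition i3 : 'I_3 := @Ordinal 3 2 isT.

(* the bilinear skew product with mu(e2,e3)=0, mu(e3,e1)= i e3, mu(e1,e2)= e2 :
   mu(x,y) = (x2y3-x3y2)*0 + (x3y1-x1y3) * i e3 + (x1y2-x2y1) * e2 *)
Definition mu (x y : 'cV[C]_3) : 'cV[C]_3 :=
  \col_(k < 3)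
    (if k == i2 then x i1 0 * y i2 0 - x i2 0 * y i1 0
     else if k == i3 then 'i * (x i3 0 * y i1 0 - x i1 0 * y i3 0)
     else 0).

(* T acts on column vectors: T(e_j) = sum_i T_ij e_i *)
Definition HL (T : 'M[C]_3) : Prop :=
  forall x y z : 'cV[C]_3,
    mu (T *m x) (mu y z) + mu (T *m y) (mu z x) + mu (T *m z) (mu x y) = 0.

Definition Gmu (g : 'M[C]_3) : Prop :=
  g \in unitmx /\ forall x y : 'cV[C]_3, g *m mu x y = mu (g *m x) (g *m y).

Definition equivHL (T T' : 'M[C]_3) : Prop :=
  exists g, Gmu g /\ T' = g *m T *m invmx g.

Definition Theta (T : 'M[C]_3) : 'M[C]_2 :=
  \matrix_(a < 2, b < 2) T (lift ord0 a) (lift ord0 b).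

Definition detcond (T : 'M[C]_3) : C := \det (Theta T - (T i1 i1)%:M).

End Defs.

From HB Require Import structures.
From mathcomp Require Import all_boot all_order all_algebra.
From mathcomp Require Import ring.
Import Order.TTheory GRing.Theory Num.Theory.
Local Open Scope ring_scope.

(* Write a 3x3 matrix in block form (1 + 2) as [[t, r], [v, Theta]]; call it
   lower block-triangular when its first row r vanishes.  The proof rests on
   three observations.
   - On lower block-triangular matrices of any size 1 + n (over any
     commutative ring) the maps A |-> A_11 and A |-> Theta(A) are
     multiplicative.  Hence for such g and T, conjugation by g fixes T_11 and
     conjugates Theta(T) - T_11 by Theta(g), so det(Theta - T_11) is unchanged.
   - For this particular mu, both HL(mu) and G_mu consist of lower
     block-triangular matrices: evaluate the Hom-Jacobi identity on
     (e1, e2, e3), resp. g(mu(x,y)) = mu(gx,gy) at the first coordinate.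
     This gives the characterisation of HL(mu) and, with the first point,
     the invariance of the condition det(Theta - T_11) != 0.
   - The shears e1 |-> e1 + a e2 + b e3 lie in G_mu, and conjugating T by one
     of them replaces v by v - (Theta - T_11) (a, b); when Theta - T_11 is
     invertible, (a, b) can be chosen to kill v.
   Case (2) only asks for an equivalent map of the same shape with the same
   degenerate determinant, and T itself is one, G_mu containing 1. *)

Section LowerBlock.
Context {R : comUnitRingType} {n : nat}.
Implicit Types A B g T : 'M[R]_n.+1.

Definition corner A : 'M[R]_n := \matrix_(a, b) A (lift ord0 a) (lift ord0 b).

Definition lower_block A : Prop := forall j : 'I_n, A ord0 (lift ord0 j) = 0.

Lemma lower_mul_row0 A B j :
  lower_block A -> (A *m B) ord0 j = A ord0 ord0 * B ord0 j.
Proof.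
move=> lA; rewrite mxE big_ord_recl big1 ?addr0 // => k _.
by rewrite lA mul0r.
Qed.

Lemma lower_mul A B : lower_block A -> lower_block B -> lower_block (A *m B).
Proof. by move=> lA lB j; rewrite lower_mul_row0 // lB mulr0. Qed.

Lemma corner_mul A B : lower_block B -> corner (A *m B) = corner A *m corner B.
Proof.
move=> lB; apply/matrixP=> a b; rewrite !mxE big_ord_recl lB mulr0 add0r.
by apply: eq_bigr => k _; rewrite !mxE.
Qed.

Lemma corner1 : corner 1%:M = 1%:M.
Proof. by apply/matrixP=> a b; rewrite !mxE (inj_eq lift_inj). Qed.

Lemma lower_invmx g : g \in unitmx -> lower_block g ->
  lower_block (invmx g) /\ g ord0 ord0 * invmx g ord0 ord0 = 1.
Proof.
move=> gU lg.
have row0 j : g ord0 ord0 * invmx g ord0 j = (1%:M : 'M[R]_n.+1) ord0 j.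
  by rewrite -lower_mul_row0 // mulmxV.
have g00 : g ord0 ord0 * invmx g ord0 ord0 = 1 by rewrite row0 mxE eqxx.
split=> // j.
rewrite -[invmx g _ _]mul1r -g00 mulrAC mulrC row0 mxE.
by rewrite (negbTE (neq_lift _ _)) mulr0.
Qed.

Lemma det_corner_conj g T : g \in unitmx -> lower_block g -> lower_block T ->
  let T' := g *m T *m invmx g in
  \det (corner T' - (T' ord0 ord0)%:M) = \det (corner T - (T ord0 ord0)%:M).
Proof.
move=> gU lg lT /=; have [lh gh] := lower_invmx g gU lg.
have -> : (g *m T *m invmx g) ord0 ord0 = T ord0 ord0.
  rewrite lower_mul_row0; last exact: lower_mul.
  by rewrite lower_mul_row0 // mulrAC gh mul1r.
have cgh : corner g *m corner (invmx g) = 1%:M.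
  by rewrite -corner_mul // mulmxV // corner1.
rewrite !corner_mul ?lower_mul //.
have -> : corner g *m corner T *m corner (invmx g) - (T ord0 ord0)%:M
          = corner g *m (corner T - (T ord0 ord0)%:M) *m corner (invmx g).
  by rewrite mulmxBr mulmxBl mul_mx_scalar -scalemxAl cgh scalemx1.
by rewrite !det_mulmx mulrAC -det_mulmx cgh det1 mul1r.
Qed.
End LowerBlock.

Section Mu.
Variable C : numClosedFieldType.
Implicit Types (T g : 'M[C]_3) (x y z : 'cV[C]_3).

Lemma i1E : i1 = ord0 :> 'I_3. Proof. exact: val_inj. Qed.
Lemma i2E : i2 = lift ord0 ord0 :> 'I_3. Proof. exact: val_inj. Qed.
Lemma i3E : i3 = lift ord0 ord_max :> 'I_3. Proof. exact: val_inj. Qed.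

Lemma ord3P (k : 'I_3) : k = i1 \/ k = i2 \/ k = i3.
Proof.
case: k => [[|[|[|k]]] lt_k3] //.
- by left; apply: val_inj.
- by right; left; apply: val_inj.
- by right; right; apply: val_inj.
Qed.

Lemma sum3 (F : 'I_3 -> C) : \sum_(k < 3) F k = F i1 + F i2 + F i3.
Proof.
rewrite !big_ord_recl big_ord0 addr0 addrA.
by congr (F _ + F _ + F _); apply: val_inj.
Qed.

Lemma mulmxE3 m p (A : 'M[C]_(m, 3)) (B : 'M[C]_(3, p)) i j :
  (A *m B) i j = A i i1 * B i1 j + A i i2 * B i2 j + A i i3 * B i3 j.
Proof. by rewrite mxE sum3. Qed.

Lemma lower_blockE T : lower_block T <-> T i1 i2 = 0 /\ T i1 i3 = 0.
Proof.
rewrite i2E i3E i1E; split=> [lT | [t12 t13] j]; first by rewrite !lT.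
case: j => [[|[|j]] lt_j2] //; [rewrite -t12 | rewrite -t13].
all: by congr (T _ (lift _ _)); apply: val_inj.
Qed.

Lemma mu_coord1 x y : mu x y i1 0 = 0.
Proof. by rewrite mxE. Qed.

Lemma mu_coord2 x y : mu x y i2 0 = x i1 0 * y i2 0 - x i2 0 * y i1 0.
Proof. by rewrite mxE. Qed.

Lemma mu_coord3 x y : mu x y i3 0 = 'i * (x i3 0 * y i1 0 - x i1 0 * y i3 0).
Proof. by rewrite mxE. Qed.

Lemma mu_mu_coord2 x y z :
  mu x (mu y z) i2 0 = x i1 0 * (y i1 0 * z i2 0 - y i2 0 * z i1 0).
Proof. by rewrite mu_coord2 mu_coord1 mu_coord2; ring. Qed.

Lemma mu_mu_coord3 x y z :
  mu x (mu y z) i3 0 = x i1 0 * (y i3 0 * z i1 0 - y i1 0 * z i3 0).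
Proof.
rewrite mu_coord3 mu_coord1 mu_coord3.
transitivity (- 'i ^+ 2 * (x i1 0 * (y i3 0 * z i1 0 - y i1 0 * z i3 0))).
  by ring.
by rewrite sqrCi opprK mul1r.
Qed.

Definition col3 (a b c : C) : 'cV[C]_3 :=
  \col_k (if k == i1 then a else if k == i2 then b else c).

Lemma col3E1 a b c : col3 a b c i1 0 = a. Proof. by rewrite mxE. Qed.
Lemma col3E2 a b c : col3 a b c i2 0 = b. Proof. by rewrite mxE. Qed.
Lemma col3E3 a b c : col3 a b c i3 0 = c. Proof. by rewrite mxE. Qed.

Lemma col_addE (u v : 'cV[C]_3) k : (u + v) k 0 = u k 0 + v k 0.
Proof. by rewrite mxE. Qed.

Lemma col0E k : (0 : 'cV[C]_3) k 0 = 0.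
Proof. by rewrite mxE. Qed.

(* First claim: T is Hom-Lie for mu iff T_12 = T_13 = 0.  Only the first row of
   T enters the identity, and on (e1, e2, e3) it reduces to -T_13 e2 + T_12 e3. *)
Lemma HL_iff T : HL T <-> T i1 i2 = 0 /\ T i1 i3 = 0.
Proof.
split=> [hT | [t12 t13] x y z].
- have /matrixP hm := hT (col3 1 0 0) (col3 0 1 0) (col3 0 0 1).
  have h2 := hm i2 0; have h3 := hm i3 0.
  rewrite !col_addE !col0E !mu_mu_coord2 !mu_mu_coord3 !mulmxE3 in h2 h3.
  rewrite ?col3E1 ?col3E2 ?col3E3 in h2 h3.
  by split; [rewrite -h3 | rewrite -h2]; ring.
- apply/matrixP => k l; rewrite ord1.
  by case: (ord3P k) => [|[|]] ->;
    rewrite !col_addE col0E ?mu_coord1 ?mu_mu_coord2 ?mu_mu_coord3 ?mulmxE3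
      ?t12 ?t13; ring.
Qed.

Lemma HL_lower T : HL T -> lower_block T.
Proof. by move/HL_iff/lower_blockE. Qed.

(* Automorphisms of mu are lower block-triangular: the first coordinate of
   g(mu(e1,e2)) is g_12, that of g(mu(e3,e1)) is i g_13, while mu(gx,gy)
   always has vanishing first coordinate. *)
Lemma Gmu_lower g : Gmu g -> lower_block g.
Proof.
move=> [_ gmu]; apply/lower_blockE.
have /matrixP /(_ i1 0) := gmu (col3 1 0 0) (col3 0 1 0).
rewrite mulmxE3 !mu_coord1 !mu_coord2 !mu_coord3 !col3E1 !col3E2 !col3E3 => e12.
have /matrixP /(_ i1 0) := gmu (col3 0 0 1) (col3 1 0 0).
rewrite mulmxE3 !mu_coord1 !mu_coord2 !mu_coord3 !col3E1 !col3E2 !col3E3 => e13.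
split; first by rewrite -e12; ring.
have /eqP : 'i * g i1 i3 = 0 by rewrite -e13; ring.
by rewrite mulf_eq0 (negbTE (neq0Ci C)) => /eqP.
Qed.

Lemma detcondE T : detcond T = \det (corner T - (T ord0 ord0)%:M).
Proof. by rewrite /detcond i1E. Qed.

Lemma detcond_conj T g : HL T -> Gmu g -> detcond (g *m T *m invmx g) = detcond T.
Proof.
move=> hT hg; rewrite !detcondE det_corner_conj //.
- by case: hg.
- exact: Gmu_lower.
- exact: HL_lower.
Qed.

Definition shear (a b : C) : 'M[C]_3 :=
  \matrix_(i, j) (if j == i1 then (if i == i1 then 1 else if i == i2 then a else b)
                 else (i == j)%:R).

Lemma shear_lower a b : lower_block (shear a b).
Proof. by apply/lower_blockE; rewrite !mxE. Qed.

Lemma shearK a b : shear a b *m shear (- a) (- b) = 1%:M.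
Proof.
apply/matrixP => i j.
by case: (ord3P i) => [|[|]] ->; case: (ord3P j) => [|[|]] ->;
  rewrite mulmxE3 !mxE /=; ring.
Qed.

Lemma shear_unit a b : shear a b \in unitmx.
Proof. by case: (mulmx1_unit (shearK a b)). Qed.

Lemma invmx_shear a b : invmx (shear a b) = shear (- a) (- b).
Proof.
by rewrite -[invmx _]mulmx1 -(shearK a b) mulmxA mulVmx ?shear_unit ?mul1mx.
Qed.

Lemma Gmu_shear a b : Gmu (shear a b).
Proof.
split=> [|x y]; first exact: shear_unit.
apply/matrixP => k l; rewrite ord1.
by case: (ord3P k) => [|[|]] ->;
  rewrite !mulmxE3 ?mu_coord1 ?mu_coord2 ?mu_coord3 ?mulmxE3 !mxE /=; ring.
Qed.

Lemma shear_conj a b T : HL T ->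
  let T' := shear a b *m T *m shear (- a) (- b) in
  T' i2 i1 = T i2 i1 - ((T i2 i2 - T i1 i1) * a + T i2 i3 * b) /\
  T' i3 i1 = T i3 i1 - (T i3 i2 * a + (T i3 i3 - T i1 i1) * b).
Proof.
move=> /HL_iff [t12 t13] /=.
by rewrite !mulmxE3 !mxE /= t12 t13; split; ring.
Qed.

Lemma mulmx2E (A : 'M[C]_2) (u : 'cV[C]_2) k :
  (A *m u) k 0 = A k ord0 * u ord0 0 + A k ord_max * u ord_max 0.
Proof.
rewrite mxE !big_ord_recl big_ord0 addr0.
by congr (_ + A k _ * u _ 0); apply: val_inj.
Qed.

Lemma corner_system T : detcond T != 0 -> exists a b : C,
  (T i2 i2 - T i1 i1) * a + T i2 i3 * b = T i2 i1 /\
  T i3 i2 * a + (T i3 i3 - T i1 i1) * b = T i3 i1.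
Proof.
move=> hd; set D := Theta T - (T i1 i1)%:M.
have DU : D \in unitmx by rewrite unitmxE unitfE.
pose v : 'cV[C]_2 := \col_k T (lift ord0 k) i1.
pose w := invmx D *m v.
have /matrixP Dw : D *m w = v by rewrite mulmxA mulmxV // mul1mx.
exists (w ord0 0), (w ord_max 0).
have := Dw ord0 0; have := Dw ord_max 0.
rewrite !mulmx2E !mxE /= -i2E -i3E !mulr0n !mulr1n !subr0 => e3 e2.
by split.
Qed.

Lemma equivHL_refl T : equivHL T T.
Proof.
exists 1%:M; split; last by rewrite mul1mx invmx1 mulmx1.
by split=> [|x y]; rewrite ?unitmx1 ?mul1mx.
Qed.

Lemma HL_block_diag T : HL T -> detcond T != 0 ->
  exists T', equivHL T T' /\
    T' i1 i2 = 0 /\ T' i1 i3 = 0 /\ T' i2 i1 = 0 /\ T' i3 i1 = 0.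
Proof.
move=> hT hd; have [a [b [e2 e3]]] := corner_system T hd.
pose T' := shear a b *m T *m shear (- a) (- b).
have /lower_blockE [t12 t13] : lower_block T'.
  apply: lower_mul; last exact: shear_lower.
  by apply: lower_mul; [exact: shear_lower | exact: HL_lower].
have [t21 t31] := shear_conj a b T hT.
exists T'; split.
  by exists (shear a b); rewrite invmx_shear; split=> //; apply: Gmu_shear.
by rewrite t21 t31 e2 e3 !subrr.
Qed.
End Mu.

Theorem proposition5p4 (C : numClosedFieldType) :
  (forall T : 'M[C]_3, HL T <-> (T i1 i2 = 0 /\ T i1 i3 = 0)) /\
  (forall T g : 'M[C]_3, HL T -> Gmu g ->
     (detcond T != 0) = (detcond (g *m T *m invmx g) != 0)) /\
  (forall T : 'M[C]_3, HL T -> detcond T != 0 ->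
     exists T', equivHL T T' /\
       T' i1 i2 = 0 /\ T' i1 i3 = 0 /\ T' i2 i1 = 0 /\ T' i3 i1 = 0) /\
  (forall T : 'M[C]_3, HL T -> detcond T = 0 ->
     exists T', equivHL T T' /\
       T' i1 i2 = 0 /\ T' i1 i3 = 0 /\ detcond T' = 0).
Proof.
split; first exact: HL_iff.
split; first by move=> T g hT hg; rewrite detcond_conj.
split; first exact: HL_block_diag.
move=> T /HL_iff [t12 t13] hd.
by exists T; split; first exact: equivHL_refl.
Qed.
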